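(* Let $m,n\geq 2$ be integers. Then $c_{\mathrm{poly}}(mn)\geq c_{\mathrm{poly}}(n)+1$.
   Context: $S(\mathbb{Z}_n)$ is the set of bijections $\mathbb{Z}_n\to\mathbb{Z}_n$, and $S_{\mathrm{poly}}(\mathbb{Z}_n)$ is the set of $\pi\in S(\mathbb{Z}_n)$ for which there is a polynomial $f\in\mathbb{Z}_n[x]$ with $\pi(x)=f(x)$ for all $x\in\mathbb{Z}_n$. $\mathrm{cyc}(\pi)$ is the number of cycles (including fixed points) of $\pi$. Define $c_{\mathrm{poly}}(n)=\min_{\pi\in S_{\mathrm{poly}}(\mathbb{Z}_n)}\max_{k\in\mathbb{Z}_n}\mathrm{cyc}(x\mapsto\pi(x+k))$. *)

From HB Require Import structures.
From mathcomp Require Import all_boot all_order all_algebra all_fingroup.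
From mathcomp Require Import boolp.
Set Implicit Arguments. Unset Strict Implicit. Unset Printing Implicit Defensive.
Import GRing.Theory.
Local Open Scope ring_scope.

(* Z_n is 'Z_n (only meaningful for n >= 2; the theorem only uses n >= 2). *)

Definition is_poly_perm (n : nat) (s : {perm 'Z_n}) : Prop :=
  exists f : {poly 'Z_n}, forall x : 'Z_n, s x = f.[x].

Lemma addk_inj (n : nat) (k : 'Z_n) : injective (fun x : 'Z_n => x + k).
Proof. by move=> x y /addIr. Qed.
Definition transl (n : nat) (k : 'Z_n) : {perm 'Z_n} := perm (@addk_inj n k).

(* x |-> pi(x + k): first translate, then apply pi (MathComp: (s*t) x = t (s x)) *)
Definition shifted (n : nat) (s : {perm 'Z_n}) (k : 'Z_n) : {perm 'Z_n} :=
  (transl k * s)%g.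

(* number of cycles, including fixed points *)
Definition cyc (n : nat) (s : {perm 'Z_n}) : nat := #|porbits s|.

Definition maxcyc (n : nat) (s : {perm 'Z_n}) : nat :=
  \max_(k : 'Z_n) cyc (shifted s k).

(* c_poly(n) = min over polynomial permutations of maxcyc; the set is
   nonempty (identity), so the big-min default #|Z_n|.+1 is never attained. *)
Definition c_poly (n : nat) : nat :=
  \big[minn/#|'Z_n|.+1]_(s : {perm 'Z_n} | `[< is_poly_perm s >]) maxcyc s.

Lemma shifted_E (n : nat) (s : {perm 'Z_n}) (k x : 'Z_n) : shifted s k x = s (x + k).
Proof. by rewrite /shifted permM /transl permE. Qed.

From mathcomp Require Import all_boot all_order all_algebra all_fingroup.
From mathcomp Require Import boolp zify.
Set Implicit Arguments. Unset Strict Implicit. Unset Printing Implicit Defensive.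
Import Order.TTheory GRing.Theory.
Local Open Scope ring_scope.

(* Let s be a polynomial permutation of Z_mn and k0 = s^-1(0). By Taylor
   expansion s(k0 + m y) = m h(y) for a polynomial h, so s maps k0 + mZ_mn
   onto mZ_mn = {m u | u in Z_n}, and reducing h mod n gives a polynomial
   permutation g of Z_n with s(k0 + m u) = m g(u). Take v maximising the
   number of cycles of x |-> g(x + v). Then x |-> s(x + k0 + m v) leaves
   mZ_mn invariant and acts on it as x |-> g(x + v), while the element 1,
   outside mZ_mn, lies in at least one further cycle. *)

Section Semiconjugacy.
Variables (T U : finType) (P : {perm T}) (Q : {perm U}) (i : U -> T).
Hypotheses (i_inj : injective i) (PiE : forall u, P (i u) = i (Q u)).

Lemma porbit_semiconj u : porbit P (i u) = i @: porbit Q u.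
Proof.
have expPiE k w : (P ^+ k)%g (i w) = i ((Q ^+ k)%g w).
  elim: k w => [|k IHk] w; first by rewrite !expg0 !perm1.
  by rewrite !expgSr !permM IHk PiE.
apply/setP => y; apply/porbitP/imsetP => [[k ->]|[w /porbitP[k ->] ->]].
  by exists ((Q ^+ k)%g u); rewrite ?mem_porbit.
by exists k; rewrite expPiE.
Qed.

Lemma card_porbits_semiconj_lt z : z \notin codom i ->
  (#|porbits Q| < #|porbits P|)%N.
Proof.
move=> z_notin_i; rewrite -(card_imset _ (imset_inj i_inj)).
have Pz : porbit P z \in porbits P by apply: imset_f.
rewrite [#|porbits P|](cardsD1 (porbit P z)) Pz ltnS.
apply/subset_leq_card/subsetP.
move=> _ /imsetP[_ /imsetP[u _ ->] ->]; rewrite -porbit_semiconj in_setD1.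
rewrite imset_f // andbT; apply: contraNneq z_notin_i => Pu_eq_z.
have : z \in porbit P (i u) by rewrite Pu_eq_z porbit_id.
by rewrite porbit_semiconj => /imsetP[w _ ->]; apply: codom_f.
Qed.

End Semiconjugacy.

Lemma horner_add_mul_factor (R : comNzRingType) (f : {poly R}) (a c : R) :
  exists h : {poly R}, forall y, f.[a + c * y] = f.[a] + c * h.[y].
Proof.
exists (\sum_(i < size f) (f^`N(i.+1).[a] * c ^+ i) *: 'X^(i.+1)) => y.
rewrite (nderiv_taylor_wide (mulrC a (c * y)) (leqnSn (size f))).
rewrite big_ord_recl nderivn0 expr0 mulr1 horner_sum big_distrr; congr (_ + _).
apply: eq_bigr => i _; rewrite lift0 hornerZ hornerXn exprMn exprS.
by rewrite /= !mulrA [c * _]mulrC.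
Qed.

Definition dilate (m n : nat) (u : 'Z_n) : 'Z_(m * n) := m%:R * (u : nat)%:R.

Definition reduce_poly (m n : nat) (h : {poly 'Z_(m * n)}) : {poly 'Z_n} :=
  \sum_(i < size h) (nat_of_ord h`_i)%:R *: 'X^i.

Section Dilation.
Variables (m n : nat).
Hypotheses (m_gt1 : (1 < m)%N) (n_gt1 : (1 < n)%N).
Let mn_gt1 : (1 < m * n)%N. Proof. nia. Qed.

Lemma val_dilate (u : 'Z_n) : dilate m u = (m * u)%N :> nat.
Proof.
have u_lt_n : (u < n)%N by rewrite -[n in (_ < n)%N]Zp_cast ?ltn_ord.
by rewrite /dilate -natrM val_Zp_nat // modn_small // ltn_pmul2l; nia.
Qed.

Lemma dilate_inj : injective (@dilate m n).
Proof.
move=> u v /(congr1 (@nat_of_ord _)); rewrite !val_dilate => /eqP.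
by rewrite eqn_pmul2l ?(ltnW m_gt1) // => /eqP/val_inj.
Qed.

Lemma dilate_natr k : dilate m (k%:R : 'Z_n) = m%:R * k%:R.
Proof.
by rewrite /dilate val_Zp_nat // -natrM muln_modr Zp_nat_mod // natrM.
Qed.

Lemma dilateD : {morph @dilate m n : u v / u + v}.
Proof.
move=> u v; have -> : u + v = (u + v)%N%:R :> 'Z_n by rewrite natrD !natr_Zp.
by rewrite dilate_natr natrD mulrDr.
Qed.

Lemma one_notin_codom_dilate : 1 \notin codom (@dilate m n).
Proof.
apply/codomP => -[u /(congr1 (@nat_of_ord _))]; rewrite val_dilate.
move=> /esym/eqP; rewrite muln_eq1 => /andP[/eqP m_eq1 _].
by move: m_gt1; rewrite m_eq1.
Qed.

Lemma dilate_horner_reduce (h : {poly 'Z_(m * n)}) (u : 'Z_n) :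
  dilate m (reduce_poly h).[u] = m%:R * h.[(u : nat)%:R].
Proof.
rewrite horner_sum horner_coef -(natr_Zp u).
under eq_bigr do rewrite hornerZ hornerXn -natrX -natrM.
rewrite -natr_sum dilate_natr natr_sum; congr (_ * _); apply: eq_bigr => i _.
by rewrite natrM natrX !natr_Zp.
Qed.

End Dilation.

Section PolyPermLowerBound.
Variables (m n : nat).
Hypotheses (m_gt1 : (1 < m)%N) (n_gt1 : (1 < n)%N).

Lemma maxcyc_dilate_conj_lt (s : {perm 'Z_(m * n)}) (g : {perm 'Z_n}) k0 :
  (forall u, dilate m (g u) = s (k0 + dilate m u)) ->
  (maxcyc g < maxcyc s)%N.
Proof.
move=> gE; have lt_maxcyc v : (cyc (shifted g v) < maxcyc s)%N.
  apply: leq_trans (leq_bigmax (k0 + dilate m v)).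
  apply: card_porbits_semiconj_lt (dilate_inj m_gt1 n_gt1) _ _
    (one_notin_codom_dilate m_gt1 n_gt1) => u.
  by rewrite !shifted_E gE !dilateD // addrCA addrA.
rewrite [maxcyc g]/maxcyc; apply/(bigmax_ltP (T := nat)).
split=> [|v _]; last exact: lt_maxcyc.
exact: leq_ltn_trans (leq0n _) (lt_maxcyc 0).
Qed.

Lemma dilate_conj_poly_perm (s : {perm 'Z_(m * n)}) k0 :
  is_poly_perm s -> s k0 = 0 ->
  exists2 g : {perm 'Z_n}, is_poly_perm g &
    forall u, dilate m (g u) = s (k0 + dilate m u).
Proof.
move=> [f sE] sk0; have [h fE] := horner_add_mul_factor f k0 m%:R.
have gE u : dilate m (reduce_poly h).[u] = s (k0 + dilate m u).
  by rewrite dilate_horner_reduce // sE /dilate fE -sE sk0 add0r.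
have g_inj : injective (horner (reduce_poly h)).
  move=> u v /(congr1 (@dilate m n)); rewrite !gE => /perm_inj/addrI.
  exact: dilate_inj.
by exists (perm g_inj) => [|u]; [exists (reduce_poly h) => u|]; rewrite permE.
Qed.

Lemma c_poly_lt_maxcyc (s : {perm 'Z_(m * n)}) :
  is_poly_perm s -> (c_poly n < maxcyc s)%N.
Proof.
move=> s_poly; have [g g_poly gE] := dilate_conj_poly_perm s_poly (permKV s 0).
apply: leq_trans (maxcyc_dilate_conj_lt gE).
by apply: (bigmin_le_cond (T := nat)); apply/asboolP.
Qed.

End PolyPermLowerBound.

Lemma c_poly_le_card (n : nat) : (c_poly n <= #|'Z_n|.+1)%N.
Proof. by rewrite /c_poly (bigmin_idl (T := nat)) geq_minl. Qed.

Theorem lemma5p2 (m n : nat) (hm : (2 <= m)%N) (hn : (2 <= n)%N) :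
  (c_poly n + 1 <= c_poly (m * n))%N.
Proof.
rewrite addn1; apply: (le_bigmin (T := nat)) => [|s /asboolP s_poly].
  apply: leq_ltn_trans (c_poly_le_card n) _.
  by rewrite !card_ord !Zp_cast //; nia.
exact: c_poly_lt_maxcyc.
Qed.
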